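(* Let $R$ be a commutative Noetherian ring of prime characteristic $p$, let $b\in\mathbb{N}$, let $W=\bigoplus_{n\geq b}W_n$ be a $\mathbb{Z}$-graded left $R[x,f]$-module (with $W_n=0$ for $n<b$), let $g_1,\ldots,g_t\in W_b$, and let $K:=\{(r_1,\ldots,r_t)\in R^t:\sum_{i=1}^t r_ig_i=0\}$. Then there is a graded left $R[x,f]$-module $W'=\bigoplus_{n\geq b-1}W'_n=(R^t/f^{-1}(K))\oplus W_b\oplus W_{b+1}\oplus\cdots$ (so $W'_{b-1}=R^t/f^{-1}(K)$ and $W'_n=W_n$ for $n\ge b$) which contains $W$ as an $R[x,f]$-submodule and satisfies $x((r_1,\ldots,r_t)+f^{-1}(K))=\sum_{i=1}^t r_i^pg_i$ for all $(r_1,\ldots,r_t)\in R^t$. Moreover, if $W$ is $x$-torsion-free, then so is $W'$, and in that case $\mathcal{G}(W')=\mathcal{G}(W)$ and $\mathcal{I}(W')=\mathcal{I}(W)$.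
   Context: $R[x,f]$ denotes the Frobenius skew polynomial ring over $R$: as a left $R$-module it is free on $(x^i)_{i\in\mathbb{N}_0}$, with multiplication subject to $xr = r^px$; it is graded with $n$th component $Rx^n$. $f:R^t\to R^t$ is the Frobenius map $(r_1,\ldots,r_t)\mapsto(r_1^p,\ldots,r_t^p)$, and $f^{-1}(K)=\{v\in R^t: f(v)\in K\}$. For a left $R[x,f]$-module $M$: $M$ is $x$-torsion-free if $xm=0$ implies $m=0$; $\operatorname{grann}_{R[x,f]}M$ is the largest graded two-sided ideal annihilating $M$; $\mathcal{G}(M)$ is the set of graded annihilators of $R[x,f]$-submodules of $M$; when $M$ is $x$-torsion-free each such graded annihilator has the form $\mathfrak{c}R[x,f]=\bigoplus_n\mathfrak{c}x^n$ for an ideal $\mathfrak{c}$ of $R$, and $\mathcal{I}(M)$ is the set of ideals $\mathfrak{c}$ of $R$ with $\mathfrak{c}R[x,f]=\operatorname{grann}_{R[x,f]}N$ for some $R[x,f]$-submodule $N$ of $M$. *)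

From HB Require Import structures.
From mathcomp Require Import all_boot all_order all_algebra.
Set Implicit Arguments. Unset Strict Implicit. Unset Printing Implicit Defensive.
Import Order.TTheory GRing.Theory Num.Theory.
Local Open Scope ring_scope.

Definition is_ideal (R : comRingType) (I : R -> Prop) : Prop :=
  [/\ I 0, (forall x y, I x -> I y -> I (x + y)) & (forall r x, I x -> I (r * x))].

Definition noetherian (R : comRingType) : Prop :=
  forall I : nat -> R -> Prop,
    (forall n, is_ideal (I n)) ->
    (forall n x, I n x -> I n.+1 x) ->
    exists N, forall n, (N <= n)%N -> forall x, I n x <-> I N x.

Section Modules.
Variables (R : comRingType) (M : lmodType R).

Definition is_submod (S : M -> Prop) : Prop :=
  S 0 /\ (forall r m1 m2, S m1 -> S m2 -> S (r *: m1 + m2)).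

Definition graded_lmod (D : int -> M -> Prop) : Prop :=
  [/\ (forall n, is_submod (D n)),
      (forall m, exists (s : seq int) (c : int -> M),
          (forall n, D n (c n)) /\ m = \sum_(n <- s) c n) &
      (forall (s : seq int) (c : int -> M), uniq s ->
          (forall n, D n (c n)) -> \sum_(n <- s) c n = 0 ->
          forall n, n \in s -> c n = 0)].

(* A Z-graded left R[x,f]-module structure on M: X is the action of x,
   so x r = r^p x, and x maps degree n into degree n+1. *)
Definition graded_frob_mod (p : nat) (X : M -> M) (D : int -> M -> Prop) : Prop :=
  [/\ graded_lmod D,
      (forall m1 m2, X (m1 + m2) = X m1 + X m2),
      (forall r m, X (r *: m) = r ^+ p *: X m) &
      (forall n m, D n m -> D (n + 1) (X m))].

Definition frob_submod (X : M -> M) (N : M -> Prop) : Prop :=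
  is_submod N /\ (forall m, N m -> N (X m)).

Definition x_torsion_free (X : M -> M) : Prop := forall m, X m = 0 -> m = 0.

End Modules.

(* A graded two-sided ideal of R[x,f] is given by its homogeneous
   components a n x^n (a n an ideal of R), closed under left and right
   multiplication by homogeneous elements s x^k:
     s x^k . r x^n = s r^(p^k) x^(k+n),   r x^n . s x^k = r s^(p^n) x^(n+k). *)
Definition graded_ideal (R : comRingType) (p : nat) (a : nat -> R -> Prop) : Prop :=
  [/\ (forall n, is_ideal (a n)),
      (forall n k r s, a n r -> a (k + n)%N (s * r ^+ (p ^ k))) &
      (forall n k r s, a n r -> a (n + k)%N (r * s ^+ (p ^ n)))].

(* The graded ideal a annihilates N: r x^n . m = r *: X^n m = 0. *)
Definition annihilates (R : comRingType) (M : lmodType R) (X : M -> M)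
    (a : nat -> R -> Prop) (N : M -> Prop) : Prop :=
  forall n r, a n r -> forall m, N m -> r *: iter n X m = 0.

Definition is_grann (R : comRingType) (p : nat) (M : lmodType R) (X : M -> M)
    (a : nat -> R -> Prop) (N : M -> Prop) : Prop :=
  [/\ graded_ideal p a, annihilates X a N &
      (forall a', graded_ideal p a' -> annihilates X a' N ->
         forall n r, a' n r -> a n r)].

Definition G_set (R : comRingType) (p : nat) (M : lmodType R) (X : M -> M)
    (a : nat -> R -> Prop) : Prop :=
  exists N : M -> Prop, frob_submod X N /\ is_grann p X a N.

(* I(M): ideals c of R with c R[x,f] = grann N for some submodule N. *)
Definition I_set (R : comRingType) (p : nat) (M : lmodType R) (X : M -> M)
    (c : R -> Prop) : Prop :=
  is_ideal c /\ exists N : M -> Prop, frob_submod X N /\ is_grann p X (fun _ => c) N.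

Definition relK (R : comRingType) (M : lmodType R) (t : nat) (g : 'I_t -> M)
    (v : 'rV[R]_t) : Prop := \sum_i v 0 i *: g i = 0.

Definition frobv (R : comRingType) (p t : nat) (v : 'rV[R]_t) : 'rV[R]_t :=
  \row_i (v 0 i) ^+ p.

Definition frob_preimage (R : comRingType) (p : nat) (M : lmodType R) (t : nat)
    (g : 'I_t -> M) (v : 'rV[R]_t) : Prop := relK g (frobv p v).

From HB Require Import structures.
From mathcomp Require Import all_boot all_order all_algebra.
From mathcomp Require Import zify boolp.
Set Implicit Arguments. Unset Strict Implicit. Unset Printing Implicit Defensive.
Import Order.TTheory GRing.Theory Num.Theory.
Local Open Scope ring_scope.

(* The R-module R^t / f^{-1}(K) is isomorphic to the image Q of
   v |-> sum_i v_i^p g_i in W_b, on which r acts as r^p.  Take W' := Q x W with Q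
   in degree b - 1 and x (q, w) := (0, q + x w).  If W is x-torsion-free and
   x (q, w) = 0, then x w = -q lies in W_b, so w lies in W_{b-1} = 0 and q = 0.
   As x W' is contained in W and W' is x-torsion-free, r x^n kills a submodule N'
   of W' iff it kills N' /\ W; hence W and W' have the same graded annihilators. *)

Section Submodules.
Variables (R : comRingType) (M : lmodType R) (S : M -> Prop).
Hypothesis S_submod : is_submod S.

Lemma submod0 : S 0. Proof. by case: S_submod. Qed.

Lemma submodD x y : S x -> S y -> S (x + y).
Proof. by case: S_submod => _ SS Sx Sy; rewrite -[x]scale1r; apply: SS. Qed.

Lemma submodZ r x : S x -> S (r *: x).
Proof. by case: S_submod => S0 SS Sx; rewrite -[_ *: _]addr0; apply: SS. Qed.

Lemma submodN x : S x -> S (- x).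
Proof. by rewrite -scaleN1r; apply: submodZ. Qed.

Lemma submodMn x k : S x -> S (x *+ k).
Proof. by rewrite -scaler_nat; apply: submodZ. Qed.

Lemma submod_sum (I : Type) (r : seq I) (P : pred I) (F : I -> M) :
  (forall i, P i -> S (F i)) -> S (\sum_(i <- r | P i) F i).
Proof. by move=> SF; elim/big_ind: _ => //; [exact: submod0 | exact: submodD]. Qed.

End Submodules.

Lemma big_isolate (V : nmodType) (I : eqType) (s : seq I) (k : I) (F : I -> V) :
  \sum_(i <- s) F i =
  \sum_(i <- k :: filter (predC1 k) s)
     (if i == k then \sum_(j <- s | j == k) F j else F i).
Proof.
rewrite big_cons eqxx big_filter [LHS](bigID (pred1 k)) /=; congr (_ + _).
by apply: eq_bigr => i /negPf ->.
Qed.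

Lemma sum_pair (U V : nmodType) (I : Type) (r : seq I) (P : pred I)
    (F : I -> U) (G : I -> V) :
  \sum_(i <- r | P i) (F i, G i) = (\sum_(i <- r | P i) F i, \sum_(i <- r | P i) G i).
Proof. by elim/big_rec3: _ => // i x y z _ ->. Qed.

Section Gradings.
Variables (R : comRingType) (M : lmodType R) (D : int -> M -> Prop).
Hypothesis D_graded : graded_lmod D.

Lemma graded_submod n : is_submod (D n). Proof. by case: D_graded. Qed.

Lemma graded_decomp_uniq m :
  exists s c, [/\ uniq s, forall n, D n (c n) & m = \sum_(n <- s) c n].
Proof.
have [_ decomp _] := D_graded; have [s [c [Dc ->]]] := decomp m.
exists (undup s), (fun n => c n *+ count_mem n s); split.
- exact: undup_uniq.
- by move=> n; exact: submodMn (graded_submod n) _ _ (Dc n).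
- by rewrite -big_undup_iterop_count.
Qed.

Lemma graded_component_eq0 k (s : seq int) (c : int -> M) :
  uniq s -> (forall n, D n (c n)) -> D k (\sum_(n <- s) c n) ->
  forall n, n \in s -> n != k -> c n = 0.
Proof.
move=> s_uniq Dc Dk n sn nk; have [_ _ indep] := D_graded.
pose e j := if j == k then \sum_(i <- s | i == k) c i - \sum_(i <- s) c i else c j.
have De j : D j (e j).
  rewrite /e; case: eqP => [->|_]; last exact: Dc.
  have Dk_submod := graded_submod k.
  apply: (submodD Dk_submod); last exact: submodN.
  by apply: (submod_sum Dk_submod) => i /eqP ->.
(* moving the total into degree k yields a homogeneous decomposition of 0 *)
have sum_e : \sum_(j <- k :: filter (predC1 k) s) e j = 0.
  rewrite big_cons {1}/e eqxx big_filter.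
  under eq_bigr => j /negPf jk do rewrite /e jk.
  rewrite [X in _ - X](bigID (pred1 k)) /=.
  by rewrite opprD addrA subrr add0r addNr.
have := indep _ e _ De sum_e n; rewrite /e (negPf nk); apply.
- by rewrite /= mem_filter /= eqxx filter_uniq.
- by rewrite inE mem_filter /= nk sn orbT.
Qed.

End Gradings.

Section ConcentratedSummand.
Variables (R : comRingType) (Q M : lmodType R) (D : int -> M -> Prop) (k : int).
Hypothesis D_graded : graded_lmod D.

Lemma graded_lmod_concentrated_prod :
  graded_lmod (fun n (x : Q * M) => (n = k \/ x.1 = 0) /\ D n x.2).
Proof.
have Dsub := graded_submod D_graded; have [_ decomp indep] := D_graded.
split.
- move=> n; split; first by split; [right | exact: submod0].
  move=> r x y [x1 Dx] [y1 Dy]; split; last exact: (submodD (Dsub n)) (submodZ _ _ _) Dy.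
  case: x1 => [nk | x10]; first by left.
  case: y1 => [nk | y10]; first by left.
  by right; rewrite /= x10 y10 scaler0 addr0.
- case=> q m; have [s [c [Dc ->]]] := decomp m.
  exists (k :: filter (predC1 k) s).
  exists (fun n => if n == k then (q, \sum_(i <- s | i == k) c i) else (0, c n)); split.
    move=> n; case: (n =P k) => [->|_]; last by split; [right | exact: Dc].
    by split; [left | apply: (submod_sum (Dsub k)) => i /eqP ->].
  rewrite (big_isolate s k c) !big_cons eqxx !big_filter.
  under eq_bigr => i /negPf ik do rewrite ik.
  under [in RHS]eq_bigr => i /negPf ik do rewrite ik.
  by rewrite sum_pair big1_eq; apply/eqP; rewrite -pair_eqE /= addr0 !eqxx.
- move=> s c s_uniq Dc sum_c n sn.
  have [sum1 sum2] : \sum_(i <- s) (c i).1 = 0 /\ \sum_(i <- s) (c i).2 = 0.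
    apply/pair_equal_spec; rewrite -sum_pair -[RHS]sum_c.
    by apply: eq_bigr => i _; case: (c i).
  have c2_eq0 : (c n).2 = 0 := indep s _ s_uniq (fun i => (Dc i).2) sum2 n sn.
  have c1_eq0 : (c n).1 = 0.
    have [nk | //] := (Dc n).1; subst n.
    rewrite -sum1 (bigD1_seq k) //= ?big1 ?addr0 // => i ik.
    by case: (Dc i).1 => // /eqP; rewrite (negPf ik).
  by apply/eqP; rewrite -pair_eqE /= c1_eq0 c2_eq0 !eqxx.
Qed.

End ConcentratedSummand.

Section FrobeniusImage.
Variables (R : comRingType) (p : nat) (M : lmodType R) (t : nat) (g : 'I_t -> M).
Hypothesis pcharRp : p \in [pchar R].

Definition frob_comb (v : 'rV[R]_t) : M := \sum_i v 0 i ^+ p *: g i.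

Lemma frob_comb_lin r v w : frob_comb (r *: v + w) = r ^+ p *: frob_comb v + frob_comb w.
Proof.
rewrite /frob_comb scaler_sumr -big_split; apply: eq_bigr => i _.
by rewrite !mxE -!(pFrobenius_autE pcharRp) rmorphD rmorphM /= scalerDl scalerA.
Qed.

Lemma frob_comb0 : frob_comb 0 = 0.
Proof.
rewrite /frob_comb big1 // => i _.
by rewrite mxE -(pFrobenius_autE pcharRp) rmorph0 scale0r.
Qed.

Lemma frob_combD v w : frob_comb (v + w) = frob_comb v + frob_comb w.
Proof. by rewrite -[v]scale1r frob_comb_lin expr1n !scale1r. Qed.

Lemma frob_combZ r v : frob_comb (r *: v) = r ^+ p *: frob_comb v.
Proof. by rewrite -[r *: v]addr0 frob_comb_lin frob_comb0 addr0. Qed.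

Lemma frob_combN v : frob_comb (- v) = - frob_comb v.
Proof. by apply/eqP; rewrite -addr_eq0 -frob_combD addNr frob_comb0. Qed.

Lemma frob_comb_submod (S : M -> Prop) v :
  is_submod S -> (forall i, S (g i)) -> S (frob_comb v).
Proof. by move=> S_submod Sg; apply: submod_sum => // i _; apply: submodZ. Qed.

Definition frob_range : pred M := fun u => `[< exists v, u = frob_comb v >].

Lemma frob_range_comb v : frob_comb v \in frob_range.
Proof. by apply/asboolP; exists v. Qed.

Lemma frob_range_zmod : zmod_closed frob_range.
Proof.
split; first by rewrite -frob_comb0 frob_range_comb.
move=> _ _ /asboolP[v ->] /asboolP[w ->].
by rewrite -frob_combN -frob_combD frob_range_comb.
Qed.
HB.instance Definition _ := GRing.isZmodClosed.Build M frob_range frob_range_zmod.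

Lemma frob_rangeZ r u : u \in frob_range -> r ^+ p *: u \in frob_range.
Proof. by move=> /asboolP[v ->]; rewrite -frob_combZ frob_range_comb. Qed.

(* Indexed by the characteristic hypothesis, on which its R-module structure
   (r acting as r^p) depends. *)
Inductive frob_image (pcharRp' : p \in [pchar R]) := FrobImage u of u \in frob_range.
Local Notation Q := (frob_image pcharRp).

Definition frob_val (q : Q) : M := let: FrobImage u _ := q in u.
HB.instance Definition _ := [isSub of Q for frob_val].
HB.instance Definition _ := [Choice of Q by <:].
HB.instance Definition _ := [SubChoice_isSubZmodule of Q by <:].

Definition frob_scale r (q : Q) : Q := FrobImage pcharRp (frob_rangeZ r (valP q)).

Lemma frob_scaleA a b q : frob_scale a (frob_scale b q) = frob_scale (a * b) q.
Proof. by apply: val_inj; rewrite /= scalerA exprMn mulrC. Qed.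

Lemma frob_scale1 : left_id 1 frob_scale.
Proof. by move=> q; apply: val_inj; rewrite /= expr1n scale1r. Qed.

Lemma frob_scaleDr : right_distributive frob_scale +%R.
Proof. by move=> a q q'; apply: val_inj; rewrite /= scalerDr. Qed.

Lemma frob_scaleDl q : {morph frob_scale^~ q : a b / a + b}.
Proof.
move=> a b; apply: val_inj.
by rewrite /= -!(pFrobenius_autE pcharRp) rmorphD scalerDl.
Qed.

HB.instance Definition _ := GRing.Zmodule_isLmodule.Build R Q
  frob_scaleA frob_scale1 frob_scaleDr frob_scaleDl.

Definition frob_class (v : 'rV[R]_t) : Q := FrobImage pcharRp (frob_range_comb v).

Lemma frob_class_lin r v w : frob_class (r *: v + w) = r *: frob_class v + frob_class w.
Proof. by apply: val_inj; rewrite /= frob_comb_lin. Qed.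

Lemma frob_class_surj q : exists v, frob_class v = q.
Proof.
case: q => u range_u; have /asboolP[v uv] := range_u.
by exists v; apply: val_inj; rewrite /= uv.
Qed.

Lemma frob_class_eq0 v : frob_class v = 0 <-> frob_preimage p g v.
Proof.
have -> : frob_preimage p g v = (frob_comb v = 0).
  by rewrite /frob_preimage /relK; congr (_ = _); apply: eq_bigr => i _; rewrite mxE.
by split=> [/(congr1 val) | v0] //; apply: val_inj.
Qed.

End FrobeniusImage.

Section FrobeniusActions.
Variables (R : comRingType) (p : nat) (M : lmodType R) (X : M -> M).
Hypothesis XD : forall m1 m2, X (m1 + m2) = X m1 + X m2.
Hypothesis XZ : forall r m, X (r *: m) = r ^+ p *: X m.

Lemma frob_act0 : X 0 = 0.
Proof. by apply: (addrI (X 0)); rewrite -XD !addr0. Qed.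

Lemma iter_frob_act0 k : iter k X 0 = 0.
Proof. by elim: k => //= k ->; rewrite frob_act0. Qed.

Lemma iter_frob_actZ k r m : iter k X (r *: m) = r ^+ (p ^ k) *: iter k X m.
Proof. by elim: k => [|k IH] /=; rewrite ?expr1 // IH XZ -exprM expnSr. Qed.

Lemma iter_frob_submod N k m : frob_submod X N -> N m -> N (iter k X m).
Proof. by case=> _ NX; elim: k => //= k IH /IH /NX. Qed.

Definition ann (N : M -> Prop) (n : nat) (r : R) : Prop :=
  forall m, N m -> r *: iter n X m = 0.

Lemma ann_graded_ideal N : frob_submod X N -> graded_ideal p (ann N).
Proof.
move=> N_submod; split.
- move=> n; split=> [m _ | x y x0 y0 m Nm | r x x0 m Nm].
  + by rewrite scale0r.
  + by rewrite scalerDl x0 // y0 // addr0.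
  + by rewrite -scalerA x0 // scaler0.
- move=> n k r s r0 m Nm.
  by rewrite iterD -scalerA -iter_frob_actZ r0 // iter_frob_act0 scaler0.
- move=> n k r s r0 m Nm.
  rewrite iterD -scalerA -iter_frob_actZ r0 //.
  by apply: (submodZ N_submod.1); exact: iter_frob_submod.
Qed.

Lemma is_grannE a N : frob_submod X N -> is_grann p X a N <-> a = ann N.
Proof.
move=> N_submod; split=> [[_ a_ann a_max] | ->].
- apply/funext => n; apply/funext => r; apply/propext; split.
  + by move=> arn m Nm; apply: a_ann.
  + exact: a_max (ann_graded_ideal N_submod) (fun _ _ => id) n r.
- split=> [|n r ar //|a' _ a'_ann n r a'r m Nm]; first exact: ann_graded_ideal.
  exact: a'_ann.
Qed.

Lemma G_setE a : G_set p X a <-> exists2 N, frob_submod X N & a = ann N.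
Proof.
split=> [[N [N_submod]] | [N N_submod]].
- by move/is_grannE => /(_ N_submod) a_ann; exists N.
- by move/(is_grannE a) => /(_ N_submod) ?; exists N.
Qed.

End FrobeniusActions.

Lemma x_torsion_free_homog_pre (R : comRingType) (p : nat) (M : lmodType R)
    (X : M -> M) (D : int -> M -> Prop) (k : int) (m : M) :
  graded_frob_mod p X D -> x_torsion_free X -> D k (X m) -> D (k - 1) m.
Proof.
move=> [D_graded XD _ X_homog] X_tf DXm.
have [s [c [s_uniq Dc m_eq]]] := graded_decomp_uniq D_graded m; subst m.
have c_eq0 n : n \in s -> n != k - 1 -> c n = 0.
  move=> sn nk; apply: X_tf.
  have := graded_component_eq0 D_graded (k := k) (s := map (+%R^~ 1) s)
    (c := fun j => X (c (j - 1))).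
  move=> /(_ _ _ _ (n + 1)); rewrite addrK; apply.
  - by rewrite map_inj_uniq //; exact: addIr.
  - by move=> j; have := X_homog _ _ (Dc (j - 1)); rewrite subrK.
  - rewrite big_map; under eq_bigr do rewrite addrK.
    by rewrite -(big_morph X XD (frob_act0 XD)).
  - exact: map_f.
  - by apply: contra nk => /eqP <-; rewrite addrK.
rewrite (bigID (pred1 (k - 1))) /=.
have -> : \sum_(i <- s | i != k - 1) c i = 0.
  by rewrite big1_seq // => i /andP[ik si]; apply: c_eq0.
by rewrite addr0; apply: (submod_sum (graded_submod D_graded _)) => i /eqP ->.
Qed.

Section FrobeniusEmbedding.
Variables (R : comRingType) (p : nat) (M M' : lmodType R).
Variables (X : M -> M) (X' : M' -> M') (iota : M -> M').
Hypothesis XD : forall m1 m2, X (m1 + m2) = X m1 + X m2.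
Hypothesis XZ : forall r m, X (r *: m) = r ^+ p *: X m.
Hypothesis X'D : forall m1 m2, X' (m1 + m2) = X' m1 + X' m2.
Hypothesis X'Z : forall r m, X' (r *: m) = r ^+ p *: X' m.
Hypothesis iota_lin : forall r m1 m2, iota (r *: m1 + m2) = r *: iota m1 + iota m2.
Hypothesis iota_inj : injective iota.
Hypothesis iotaX : forall m, iota (X m) = X' (iota m).

Lemma iota0 : iota 0 = 0.
Proof.
have := iota_lin 1 0 0; rewrite !scale1r addr0 => iota00.
by apply: (addrI (iota 0)); rewrite -iota00 addr0.
Qed.

Lemma iotaZ r m : iota (r *: m) = r *: iota m.
Proof. by rewrite -[r *: m]addr0 iota_lin iota0 addr0. Qed.

Lemma iota_iter n m : iota (iter n X m) = iter n X' (iota m).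
Proof. by elim: n => //= n IH; rewrite iotaX IH. Qed.

Definition image_submod (N : M -> Prop) (m' : M') : Prop := exists2 m, N m & m' = iota m.

Lemma frob_submod_image N : frob_submod X N -> frob_submod X' (image_submod N).
Proof.
move=> [[N0 NS] NX]; split; first split.
- by exists 0; rewrite ?iota0.
- move=> r _ _ [m1 N1 ->] [m2 N2 ->].
  by exists (r *: m1 + m2); [apply: NS | rewrite iota_lin].
- by move=> _ [m Nm ->]; exists (X m); [apply: NX | rewrite iotaX].
Qed.

Lemma ann_image N : ann X' (image_submod N) = ann X N.
Proof.
apply/funext => n; apply/funext => r; apply/propext; split.
- move=> r_ann m Nm; apply: iota_inj.
  by rewrite iotaZ iota_iter iota0; apply: r_ann; exists m.
- by move=> r_ann _ [m Nm ->]; rewrite -iota_iter -iotaZ r_ann ?iota0.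
Qed.

Lemma frob_submod_preimage N' : frob_submod X' N' -> frob_submod X (N' \o iota).
Proof.
move=> [[N0 NS] NX]; split; first split.
- by rewrite /= iota0.
- by move=> r m1 m2 N1 N2; rewrite /= iota_lin; apply: NS.
- by move=> m Nm; rewrite /= iotaX; apply: NX.
Qed.

Hypothesis p_gt0 : (0 < p)%N.
Hypothesis X'_tf : x_torsion_free X'.
Hypothesis X'_range : forall m', exists m, X' m' = iota m.

(* If r x^n kills the preimage then x (r x^n m') = r^(p-1) (r x^n) (x m') = 0,
   since x m' lies in the image of iota; torsion-freeness concludes. *)
Lemma ann_preimage N' : frob_submod X' N' -> ann X (N' \o iota) = ann X' N'.
Proof.
move=> N'_submod; apply/funext => n; apply/funext => r; apply/propext; split.
- move=> r_ann m' N'm'; apply: X'_tf; have [m X'm'] := X'_range m'.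
  rewrite X'Z -iterS iterSr X'm' -iota_iter -(prednK p_gt0) exprSr -scalerA.
  rewrite -iotaZ r_ann ?iota0 ?scaler0 //= -X'm'.
  by case: N'_submod => _; apply.
- by move=> r_ann m N'm; apply: iota_inj; rewrite iotaZ iota_iter iota0 r_ann.
Qed.

Lemma G_set_embedding a : G_set p X a <-> G_set p X' a.
Proof.
rewrite (G_setE XD XZ) (G_setE X'D X'Z); split=> [[N N_submod ->] | [N' N'_submod ->]].
- by exists (image_submod N); [exact: frob_submod_image | rewrite ann_image].
- by exists (N' \o iota); [exact: frob_submod_preimage | rewrite ann_preimage].
Qed.

Lemma I_set_embedding c : I_set p X c <-> I_set p X' c.
Proof. by split=> -[c_ideal /G_set_embedding]. Qed.

End FrobeniusEmbedding.

Section Extension.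
Variables (R : comRingType) (p : nat) (M : lmodType R) (t : nat) (g : 'I_t -> M).
Hypothesis pcharRp : p \in [pchar R].
Variables (X : M -> M) (D : int -> M -> Prop) (b : nat).
Hypothesis X_graded : graded_frob_mod p X D.
Hypothesis D_low : forall n : int, n < b%:Z -> forall m, D n m -> m = 0.
Hypothesis D_g : forall i, D b%:Z (g i).

Local Notation W' := (frob_image g pcharRp * M)%type.

Definition ext_act (x : W') : W' := (0, frob_val x.1 + X x.2).
(* W'_n := W_n for n != b - 1, and W'_{b-1} := Q x W_{b-1}, where W_{b-1} = 0. *)
Definition ext_grading (n : int) (x : W') : Prop := (n = b%:Z - 1 \/ x.1 = 0) /\ D n x.2.
Definition ext_incl (m : M) : W' := (0, m).
Definition ext_bottom (v : 'rV[R]_t) : W' := (frob_class g pcharRp v, 0).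

Let D_graded : graded_lmod D. Proof. by case: X_graded. Qed.
Let XD : forall m1 m2, X (m1 + m2) = X m1 + X m2. Proof. by case: X_graded. Qed.
Let XZ : forall r m, X (r *: m) = r ^+ p *: X m. Proof. by case: X_graded. Qed.
Let X_homog : forall n m, D n m -> D (n + 1) (X m). Proof. by case: X_graded. Qed.

Lemma frob_val_homog (q : frob_image g pcharRp) : D b%:Z (frob_val q).
Proof.
have [v <-] := frob_class_surj q.
exact: frob_comb_submod (graded_submod D_graded _) D_g.
Qed.

Lemma ext_graded_frob_mod : graded_frob_mod p ext_act ext_grading.
Proof.
split.
- exact: graded_lmod_concentrated_prod.
- move=> [q1 m1] [q2 m2]; apply/pair_equal_spec; split=> /=; first by rewrite addr0.
  by rewrite XD addrACA.
- move=> r [q m]; apply/pair_equal_spec; split=> /=; first by rewrite scaler0.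
  by rewrite XZ scalerDr.
- move=> n [q m] [/= n_or_q0 Dm]; split=> /=; first by right.
  case: n_or_q0 => [nb | ->]; last by rewrite add0r; apply: X_homog.
  rewrite nb subrK; apply: (submodD (graded_submod D_graded _)).
  + exact: frob_val_homog.
  + by rewrite -[b%:Z](subrK 1); apply: X_homog; rewrite -nb.
Qed.

Lemma ext_grading_low n : n < b%:Z - 1 -> forall x, ext_grading n x -> x = 0.
Proof.
move=> nb [q m] [/= [n_eq | ->] Dm]; first by rewrite n_eq ltxx in nb.
by rewrite (D_low _ Dm) //; lia.
Qed.

Lemma ext_incl_lin r m1 m2 : ext_incl (r *: m1 + m2) = r *: ext_incl m1 + ext_incl m2.
Proof. by apply/pair_equal_spec; rewrite /= scaler0 addr0. Qed.

Lemma ext_incl_inj : injective ext_incl.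
Proof. by move=> m1 m2 /pair_equal_spec[]. Qed.

Lemma ext_incl_act m : ext_incl (X m) = ext_act (ext_incl m).
Proof. by rewrite /ext_act /= add0r. Qed.

Lemma ext_incl_homog n m : D n m -> ext_grading n (ext_incl m).
Proof. by split; [right |]. Qed.

Lemma ext_grading_high n :
  b%:Z <= n -> forall x, ext_grading n x -> exists m, D n m /\ x = ext_incl m.
Proof.
move=> bn [q m] [/= [n_eq | ->] Dm]; last by exists m.
by move: bn; rewrite n_eq; lia.
Qed.

Lemma ext_bottom_lin r v w : ext_bottom (r *: v + w) = r *: ext_bottom v + ext_bottom w.
Proof. by apply/pair_equal_spec; rewrite /= frob_class_lin scaler0 addr0. Qed.

Lemma ext_bottom_homog v : ext_grading (b%:Z - 1) (ext_bottom v).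
Proof. by split; [left | exact: submod0 (graded_submod D_graded _)]. Qed.

Lemma ext_bottom_surj x : ext_grading (b%:Z - 1) x -> exists v, ext_bottom v = x.
Proof.
case: x => q m [_ /= Dm]; have [v <-] := frob_class_surj q.
by exists v; rewrite (D_low _ Dm) //; lia.
Qed.

Lemma ext_bottom_eq0 v : ext_bottom v = 0 <-> frob_preimage p g v.
Proof.
rewrite -(frob_class_eq0 g pcharRp); split=> v0; last by rewrite /ext_bottom v0.
by case/pair_equal_spec: v0.
Qed.

Lemma ext_act_bottom v : ext_act (ext_bottom v) = ext_incl (frob_comb p g v).
Proof. by rewrite /ext_act /= (frob_act0 XD) addr0. Qed.

Lemma ext_torsion_free : x_torsion_free X -> x_torsion_free ext_act.
Proof.
move=> X_tf [q m] /pair_equal_spec[_ /= qXm0].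
have Dm : D (b%:Z - 1) m.
  apply: x_torsion_free_homog_pre X_graded X_tf _.
  have -> : X m = - frob_val q by apply/eqP; rewrite -addr_eq0 addrC qXm0.
  exact: submodN (graded_submod D_graded _) _ (frob_val_homog q).
have m0 : m = 0 by apply: D_low Dm; lia.
rewrite m0 (frob_act0 XD) addr0 in qXm0.
by apply/pair_equal_spec; split=> //; apply: val_inj.
Qed.

Section TorsionFree.
Hypothesis X_tf : x_torsion_free X.

Lemma ext_G_set a : G_set p X a <-> G_set p ext_act a.
Proof.
have [_ extD extZ _] := ext_graded_frob_mod.
apply: (G_set_embedding XD XZ extD extZ ext_incl_lin ext_incl_inj ext_incl_act).
- exact: prime_gt0 (pcharf_prime pcharRp).
- exact: ext_torsion_free.
- by move=> x; eexists.
Qed.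

Lemma ext_I_set c : I_set p X c <-> I_set p ext_act c.
Proof. by split=> -[c_ideal /ext_G_set]. Qed.

End TorsionFree.

End Extension.

Theorem lemma2p8 (R : comRingType) (p b : nat) (M : lmodType R) (X : M -> M)
    (D : int -> M -> Prop) (t : nat) (g : 'I_t -> M) :
  p \in [pchar R] -> noetherian R ->
  graded_frob_mod p X D ->
  (forall n : int, n < b%:Z -> forall m, D n m -> m = 0) ->
  (forall i, D b%:Z (g i)) ->
  exists (M' : lmodType R) (X' : M' -> M') (D' : int -> M' -> Prop)
         (iota : M -> M') (psi : 'rV[R]_t -> M'),
    [/\ graded_frob_mod p X' D',
        (forall n : int, n < b%:Z - 1 -> forall m, D' n m -> m = 0),
        [/\ (forall r m1 m2, iota (r *: m1 + m2) = r *: iota m1 + iota m2),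
            injective iota,
            (forall m, iota (X m) = X' (iota m)),
            (forall n m, D n m -> D' n (iota m)) &
            (forall n : int, b%:Z <= n -> forall m', D' n m' ->
               exists m, D n m /\ m' = iota m)],
        [/\ (forall r v1 v2, psi (r *: v1 + v2) = r *: psi v1 + psi v2),
            (forall v, D' (b%:Z - 1) (psi v)),
            (forall m', D' (b%:Z - 1) m' -> exists v, psi v = m'),
            (forall v, psi v = 0 <-> frob_preimage p g v) &
            (forall v, X' (psi v) = iota (\sum_i (v 0 i) ^+ p *: g i))] &
        (x_torsion_free X ->
           [/\ x_torsion_free X',
               (forall a, G_set p X a <-> G_set p X' a) &
               (forall c, I_set p X c <-> I_set p X' c)])].
Proof.
move=> pcharRp _ X_graded D_low D_g.
exists (frob_image g pcharRp * M)%type, (ext_act X), (ext_grading D b),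
  (ext_incl g pcharRp), (ext_bottom g pcharRp).
split.
- exact: ext_graded_frob_mod.
- exact: ext_grading_low.
- split; [exact: ext_incl_lin | exact: ext_incl_inj | exact: ext_incl_act |
          exact: ext_incl_homog | exact: ext_grading_high].
- split; [exact: ext_bottom_lin | exact: ext_bottom_homog X_graded | exact: ext_bottom_surj |
          exact: ext_bottom_eq0 | exact: (ext_act_bottom g pcharRp X_graded)].
- move=> X_tf; split.
  + exact: ext_torsion_free X_graded D_low D_g X_tf.
  + exact: ext_G_set X_graded D_low D_g X_tf.
  + exact: ext_I_set X_graded D_low D_g X_tf.
Qed.
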